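(* Let $(V_m)_{m\ge1}$ be a sequence of positive numbers which is subadditive, i.e. $V_{m+n}\le V_m+V_n$ for all $m,n\ge1$. Then \[ \sum_{i\ge1}\frac{V_{2^i}^2}{2^i}\le 65\sum_{k\ge1}\frac{V_k^2}{k^2}. \] *)

From mathcomp Require Import all_boot all_order all_algebra.
From mathcomp Require Import all_classical all_reals all_analysis.

From mathcomp Require Import all_boot all_order all_algebra.
From mathcomp Require Import all_classical all_reals all_analysis.
From mathcomp Require Import ring lra zify.
Import Order.TTheory GRing.Theory Num.Theory.
Local Open Scope ring_scope.

(* Write Q(n) = sum_{k <= n} V_k^2 and A(n) = sum_{k <= n} V_k^2 / k^2.  Squaring
   V_n <= V_k + V_{n-k} and summing over the splittings of n gives
   n V_n^2 <= 4 Q(n), so the dyadic term V_{2^i}^2 / 2^i is at most 4 x_i with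
   x_i = Q(2^i) / 4^i.  Bounding k^2 <= 4^{i+1} on the block 2^i < k <= 2^{i+1}
   gives x_{i+1} <= x_i / 4 + A(2^{i+1}) - A(2^i).  This quarter contraction
   makes 3 sum_{1 <= i <= N} V_{2^i}^2 / 2^i + 4 x_N <= 16 A(2^N) an invariant,
   so the inequality even holds with 16/3 in place of 65. *)

Lemma sqr_le_dbl_sqrD (R : realDomainType) (a b c : R) :
  0 <= c -> c <= a + b -> c ^+ 2 <= 2 * a ^+ 2 + 2 * b ^+ 2.
Proof. by move=> c_ge0 c_le; have := sqr_ge0 (a - b); nra. Qed.

Lemma sum_le_of_quarter_recurrence (R : realFieldType) (t x a : nat -> R) :
  (forall i, 0 <= x i) -> x 0 <= a 0 ->
  (forall i, t i.+1 <= 4 * x i.+1) ->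
  (forall i, x i.+1 <= x i / 4 + (a i.+1 - a i)) ->
  forall N, 3 * \sum_(1 <= i < N.+1) t i <= 16 * a N.
Proof.
move=> x_ge0 x0_le t_le x_rec N.
suff inv : 3 * \sum_(1 <= i < N.+1) t i + 4 * x N <= 16 * a N.
  by have := x_ge0 N; lra.
elim: N => [|N IH]; first by rewrite big_geq //; have := x_ge0 0; lra.
rewrite big_nat_recr //=.
by have := t_le N; have := x_rec N; lra.
Qed.

Section SquareSums.
Context {R : realFieldType} (V : nat -> R).

Definition sqsum n := \sum_(1 <= k < n.+1) V k ^+ 2.
Definition wsqsum n := \sum_(1 <= k < n.+1) V k ^+ 2 / k%:R ^+ 2.

Lemma sqsum_ge0 n : 0 <= sqsum n.
Proof. by apply: sumr_ge0 => k _; apply: sqr_ge0. Qed.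

Lemma wsqsum_ge0 n : 0 <= wsqsum n.
Proof. by apply: sumr_ge0 => k _; rewrite divr_ge0 ?sqr_ge0. Qed.

Lemma sqsum_sub_le m n : (m <= n)%N ->
  sqsum n - sqsum m <= n%:R ^+ 2 * (wsqsum n - wsqsum m).
Proof.
move=> le_mn; have le_mn1 : (m.+1 <= n.+1)%N by rewrite ltnS.
rewrite /sqsum /wsqsum !(@big_cat_nat _ _ _ m.+1 1 n.+1) //=.
rewrite [X in X <= _]addrC addKr [X in _ * X]addrC addKr mulr_sumr.
apply: ler_sum_nat => k /andP[lt_mk le_kn].
have k2_gt0 : 0 < k%:R ^+ 2 :> R by rewrite exprn_gt0 // ltr0n; lia.
rewrite mulrA ler_pdivlMr // mulrC ler_wpM2r ?sqr_ge0 //.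
by rewrite -!natrX ler_nat leq_exp2r //; lia.
Qed.

Lemma sqsum_double_le m : (0 < m)%N ->
  sqsum (2 * m) / (2 * m)%:R ^+ 2
    <= sqsum m / m%:R ^+ 2 / 4 + (wsqsum (2 * m) - wsqsum m).
Proof.
move=> m_gt0; have m_pos : 0 < m%:R :> R by rewrite ltr0n.
have := @sqsum_sub_le m (2 * m) (leq_pmull m (isT : (0 < 2)%N)).
rewrite natrM ler_pdivrMr ?exprn_gt0 ?mulr_gt0 //.
set dA := _ - wsqsum m => le_dA.
have -> : (sqsum m / m%:R ^+ 2 / 4 + dA) * (2 * m%:R) ^+ 2
          = sqsum m + (2 * m%:R) ^+ 2 * dA by field; rewrite gt_eqF.
lra.
Qed.

Hypothesis V_ge0 : forall m, (1 <= m)%N -> 0 <= V m.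
Hypothesis V_subadd :
  forall m n, (1 <= m)%N -> (1 <= n)%N -> V (m + n)%N <= V m + V n.

Lemma mul_sqr_le_sqsum n : n%:R * V n ^+ 2 <= 4 * sqsum n.
Proof.
case: n => [|n]; first by rewrite mul0r /sqsum big_geq // mulr0.
have split_le k : (1 <= k < n.+1)%N ->
    V n.+1 ^+ 2 <= 2 * V k ^+ 2 + 2 * V (n.+1 - k) ^+ 2.
  move=> /andP[k_ge1 lt_kn]; apply: sqr_le_dbl_sqrD; first exact: V_ge0.
  by rewrite -{1}(subnKC (ltnW lt_kn)); apply: V_subadd; rewrite // subn_gt0.
have rev : \sum_(1 <= k < n.+1) V (n.+1 - k) ^+ 2 = sqsum n.
  rewrite /sqsum big_nat_rev; apply: eq_big_nat => k /andP[_ lt_kn].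
  by congr (V _ ^+ 2); lia.
have le_n : n%:R * V n.+1 ^+ 2 <= 4 * sqsum n.
  have := ler_sum_nat split_le.
  rewrite sumr_const_nat subSS subn0 big_split /= -!mulr_sumr rev -/(sqsum n).
  by rewrite mulr_natl; lra.
rewrite /sqsum big_nat_recr //= -/(sqsum n) -natr1 mulrDl mul1r.
by have := sqr_ge0 (V n.+1); lra.
Qed.

Lemma sqr_div_le_sqsum n : (0 < n)%N ->
  V n ^+ 2 / n%:R <= 4 * (sqsum n / n%:R ^+ 2).
Proof.
move=> n_gt0; have n_pos : 0 < n%:R :> R by rewrite ltr0n.
rewrite ler_pdivrMr // (_ : _ * n%:R = 4 * sqsum n / n%:R).
  by rewrite ler_pdivlMr // mulrC; apply: mul_sqr_le_sqsum.
by field; rewrite gt_eqF.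
Qed.

Lemma dyadic_sum_le N :
  3 * \sum_(1 <= i < N.+1) V (2 ^ i)%N ^+ 2 / (2 ^ i)%:R <= 16 * wsqsum (2 ^ N).
Proof.
apply: (@sum_le_of_quarter_recurrence _ (fun i => V (2 ^ i)%N ^+ 2 / (2 ^ i)%:R)
  (fun i => sqsum (2 ^ i) / (2 ^ i)%:R ^+ 2) (fun i => wsqsum (2 ^ i))).
- by move=> i; rewrite divr_ge0 ?sqsum_ge0 ?sqr_ge0.
- by rewrite expn0 expr1n divr1 /sqsum /wsqsum !big_nat1 expr1n divr1.
- by move=> i; apply: sqr_div_le_sqsum; rewrite expn_gt0.
- by move=> i; rewrite expnS; apply: sqsum_double_le; rewrite expn_gt0.
Qed.

End SquareSums.

Local Open Scope ereal_scope.

Theorem lemma1 (R : realType) (V : nat -> R)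
  (Vpos : forall m : nat, (1 <= m)%N -> (0 < V m)%R)
  (Vsub : forall m n : nat, (1 <= m)%N -> (1 <= n)%N -> (V (m + n)%N <= V m + V n)%R) :
  \sum_(1 <= i <oo) ((V (2 ^ i)%N) ^+ 2 / (2 ^ i)%:R)%:E
    <= 65%:E * \sum_(1 <= k <oo) ((V k) ^+ 2 / (k%:R) ^+ 2)%:E.
Proof.
have V_ge0 m (m_ge1 : (1 <= m)%N) : (0 <= V m)%R := ltW (Vpos m m_ge1).
have t_ge0 i : (0 <= V (2 ^ i)%N ^+ 2 / (2 ^ i)%:R)%R by rewrite divr_ge0 ?sqr_ge0.
apply: lime_le; first by apply: is_cvg_nneseries => i _ _; rewrite lee_fin.
apply: nearW => N; rewrite sumEFin.
have partial_le : (\sum_(1 <= i < N) V (2 ^ i)%N ^+ 2 / (2 ^ i)%:R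
                   <= 65 * wsqsum V (2 ^ N))%R.
  have := @dyadic_sum_le _ V V_ge0 Vsub N; have := wsqsum_ge0 V (2 ^ N).
  have : (\sum_(1 <= i < N) V (2 ^ i)%N ^+ 2 / (2 ^ i)%:R
          <= \sum_(1 <= i < N.+1) V (2 ^ i)%N ^+ 2 / (2 ^ i)%:R)%R.
    case: N => [|N]; first by rewrite !big_geq.
    by rewrite [X in (_ <= X)%R]big_nat_recr //= lerDl.
  lra.
apply: (le_trans (_ : _ <= (65 * wsqsum V (2 ^ N))%:E)); first by rewrite lee_fin.
rewrite EFinM lee_wpmul2l ?lee_fin // /wsqsum -sumEFin.
by apply: nneseries_lim_ge => k _ _; rewrite lee_fin divr_ge0 ?sqr_ge0.
Qed.
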